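(* Let $M\models\mathrm{AA}$ be extremally $\aleph_0$-saturated. If $x\in M$ is normal and $y\in M$, then there is at most one pair $(u,v)\in M^2$ with $y=xu+v$ and $v+1\le x$. Moreover, writing, for normal $x$ and arbitrary $y$, $y=x\cdot f(x,y)+g(x,y)$ with $g(x,y)+1\le x$, the functions $f$ and $g$ are definable on the set $\{(x,y)\in M^2: |x|=1\}$.
   Context: Structures are complete metric spaces of diameter at most $1$ in the language $L=\{+,\cdot,\wedge,\vee,0,1\}$ (operations $1$-Lipschitz, $d$ the only relation symbol). Affine formulas are built from $1$ and atomic formulas $d(t_1,t_2)$ using $+$, scalar multiplication by reals, $\sup_x$, $\inf_x$. $\mathrm{AA}$ is the set of all closed affine conditions true in every model of first-order Peano arithmetic (formulated in $L$ with lattice operations min/max and discrete metric). $|x|=d(x,0)$; $x$ is normal if $|x|=1$; $x\le y$ means $x\wedge y=x$. A model $M$ is extremally $\aleph_0$-saturated if for every finite $A\subseteq M$ every extreme type over $A$ (an extreme point of the compact convex set of positive linear functionals $p$ with $p(1)=1$ on affine formulas in one variable with parameters from $A$, modulo the theory of $(M,a)_{a\in A}$) is realized in $M$. For a definable set $E\subseteq M^2$ (here $E=\{(x,y):|x|=1\}$), a function $h:E\to M$ is definable if $(x,y,z)\mapsto d(h(x,y),z)$ is a uniform limit on $E\times M$ of interpretations of affine formulas with parameters from $M$. *)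

From Stdlib Require Import Reals List ClassicalEpsilon.
Open Scope R_scope.

Record Lstr := {
  car :> Type;
  dist : car -> car -> R;
  sadd : car -> car -> car;
  smul : car -> car -> car;
  smeet : car -> car -> car;
  sjoin : car -> car -> car;
  szero : car;
  sone : car }.

Definition Lip2 (S : Lstr) (f : car S -> car S -> car S) : Prop :=
  forall x y x' y', dist S (f x y) (f x' y') <= dist S x x' + dist S y y'.

Record Lstructure_ok (S : Lstr) : Prop := {
  d_refl : forall x, dist S x x = 0;
  d_sep : forall x y, dist S x y = 0 -> x = y;
  d_sym : forall x y, dist S x y = dist S y x;
  d_tri : forall x y z, dist S x z <= dist S x y + dist S y z;
  d_diam : forall x y, 0 <= dist S x y <= 1;
  d_complete : forall u : nat -> car S,
    (forall eps, eps > 0 -> exists N, forall m n, (m >= N)%nat -> (n >= N)%nat ->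
        dist S (u m) (u n) < eps) ->
    exists l, forall eps, eps > 0 -> exists N, forall n, (n >= N)%nat -> dist S (u n) l < eps;
  lip_add : Lip2 S (sadd S);
  lip_mul : Lip2 S (smul S);
  lip_meet : Lip2 S (smeet S);
  lip_join : Lip2 S (sjoin S) }.

Inductive term (P : Type) : Type :=
  | tvar (n : nat)
  | tpar (p : P)
  | tadd (s t : term P)
  | tmul (s t : term P)
  | tmeet (s t : term P)
  | tjoin (s t : term P)
  | tzero
  | tone.
Arguments tvar {P}. Arguments tpar {P}. Arguments tadd {P}. Arguments tmul {P}.
Arguments tmeet {P}. Arguments tjoin {P}. Arguments tzero {P}. Arguments tone {P}.

Inductive aform (P : Type) : Type :=
  | fone
  | fdist (s t : term P)
  | fadd (phi psi : aform P)
  | fscale (r : R) (phi : aform P)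
  | fsup (n : nat) (phi : aform P)
  | finf (n : nat) (phi : aform P).
Arguments fone {P}. Arguments fdist {P}. Arguments fadd {P}. Arguments fscale {P}.
Arguments fsup {P}. Arguments finf {P}.

Definition upd {X : Type} (e : nat -> X) (n : nat) (a : X) : nat -> X :=
  fun k => if Nat.eqb k n then a else e k.

Fixpoint teval {P : Type} (S : Lstr) (pi : P -> car S) (e : nat -> car S)
    (t : term P) : car S :=
  match t with
  | tvar n => e n
  | tpar p => pi p
  | tadd s t => sadd S (teval S pi e s) (teval S pi e t)
  | tmul s t => smul S (teval S pi e s) (teval S pi e t)
  | tmeet s t => smeet S (teval S pi e s) (teval S pi e t)
  | tjoin s t => sjoin S (teval S pi e s) (teval S pi e t)
  | tzero => szero S
  | tone => sone S
  end.

Definition Rsup (E : R -> Prop) : R := epsilon (inhabits 0) (fun s => is_lub E s).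

Fixpoint feval {P : Type} (S : Lstr) (pi : P -> car S) (e : nat -> car S)
    (phi : aform P) : R :=
  match phi with
  | fone => 1
  | fdist s t => dist S (teval S pi e s) (teval S pi e t)
  | fadd phi psi => feval S pi e phi + feval S pi e psi
  | fscale r phi => r * feval S pi e phi
  | fsup n phi => Rsup (fun r => exists a : car S, r = feval S pi (upd e n a) phi)
  | finf n phi => - Rsup (fun r => exists a : car S, r = - feval S pi (upd e n a) phi)
  end.

Fixpoint term_vars_in {P : Type} (V : nat -> Prop) (t : term P) : Prop :=
  match t with
  | tvar n => V n
  | tpar _ | tzero | tone => True
  | tadd s t | tmul s t | tmeet s t | tjoin s t => term_vars_in V s /\ term_vars_in V t
  end.

Fixpoint form_vars_in {P : Type} (V : nat -> Prop) (phi : aform P) : Prop :=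
  match phi with
  | fone => True
  | fdist s t => term_vars_in V s /\ term_vars_in V t
  | fadd phi psi => form_vars_in V phi /\ form_vars_in V psi
  | fscale _ phi => form_vars_in V phi
  | fsup n phi | finf n phi => form_vars_in (fun k => k = n \/ V k) phi
  end.

Definition closed_form {P : Type} (phi : aform P) : Prop :=
  form_vars_in (fun _ => False) phi.

Fixpoint term_pars_in {P : Type} (Q : P -> Prop) (t : term P) : Prop :=
  match t with
  | tvar _ | tzero | tone => True
  | tpar p => Q p
  | tadd s t | tmul s t | tmeet s t | tjoin s t => term_pars_in Q s /\ term_pars_in Q t
  end.

Fixpoint form_pars_in {P : Type} (Q : P -> Prop) (phi : aform P) : Prop :=
  match phi with
  | fone => True
  | fdist s t => term_pars_in Q s /\ term_pars_in Q t
  | fadd phi psi => form_pars_in Q phi /\ form_pars_in Q psi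
  | fscale _ phi => form_pars_in Q phi
  | fsup _ phi | finf _ phi => form_pars_in Q phi
  end.

Definition sent_val (S : Lstr) (phi : aform Empty_set) : R :=
  feval S (fun p : Empty_set => match p with end) (fun _ => szero S) phi.

Inductive aterm : Type :=
  | avar (n : nat) | azero | aone | aadd (s t : aterm) | amul (s t : aterm).

Inductive aformula : Type :=
  | aeq (s t : aterm)
  | afalse
  | aimp (phi psi : aformula)
  | aforall (n : nat) (phi : aformula).

Record PAsig := {
  pcar :> Type;
  padd : pcar -> pcar -> pcar;
  pmul : pcar -> pcar -> pcar;
  pzero : pcar;
  pone : pcar }.

Fixpoint ateval (N : PAsig) (e : nat -> pcar N) (t : aterm) : pcar N :=
  match t with
  | avar n => e n
  | azero => pzero N
  | aone => pone N
  | aadd s t => padd N (ateval N e s) (ateval N e t)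
  | amul s t => pmul N (ateval N e s) (ateval N e t)
  end.

Fixpoint asat (N : PAsig) (e : nat -> pcar N) (phi : aformula) : Prop :=
  match phi with
  | aeq s t => ateval N e s = ateval N e t
  | afalse => False
  | aimp phi psi => asat N e phi -> asat N e psi
  | aforall n phi => forall a : pcar N, asat N (upd e n a) phi
  end.

Record PAmodel (N : PAsig) : Prop := {
  pa_succ_ne0 : forall x, padd N x (pone N) <> pzero N;
  pa_succ_inj : forall x y, padd N x (pone N) = padd N y (pone N) -> x = y;
  pa_add0 : forall x, padd N x (pzero N) = x;
  pa_addS : forall x y, padd N x (padd N y (pone N)) = padd N (padd N x y) (pone N);
  pa_mul0 : forall x, pmul N x (pzero N) = pzero N;
  pa_mulS : forall x y, pmul N x (padd N y (pone N)) = padd N (pmul N x y) x;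
  pa_ind : forall (phi : aformula) (n : nat) (e : nat -> pcar N),
    asat N (upd e n (pzero N)) phi ->
    (forall a, asat N (upd e n a) phi -> asat N (upd e n (padd N a (pone N))) phi) ->
    forall a, asat N (upd e n a) phi }.

Definition PA_le (N : PAsig) (x y : pcar N) : Prop := exists z, padd N x z = y.

Definition PA_Lstr (N : PAsig) : Lstr := {|
  car := pcar N;
  dist := fun x y => if excluded_middle_informative (x = y) then 0 else 1;
  sadd := padd N;
  smul := pmul N;
  smeet := fun x y => if excluded_middle_informative (PA_le N x y) then x else y;
  sjoin := fun x y => if excluded_middle_informative (PA_le N x y) then y else x;
  szero := pzero N;
  sone := pone N |}.

Definition satisfies_AA (M : Lstr) : Prop :=
  forall phi : aform Empty_set, closed_form phi ->
    (forall N : PAsig, PAmodel N -> sent_val (PA_Lstr N) phi <= 0) ->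
    sent_val M phi <= 0.

Definition D1 (M : Lstr) (A : list (car M)) (phi : aform (car M)) : Prop :=
  form_vars_in (fun k => k = 0%nat) phi /\ form_pars_in (fun a => In a A) phi.

Definition ev1 (M : Lstr) (b : car M) (phi : aform (car M)) : R :=
  feval M (fun a => a) (fun _ => b) phi.

(* positive (modulo the theory of (M,a)_{a in A}) linear functionals with p(1)=1 *)
Definition is_type (M : Lstr) (A : list (car M)) (p : aform (car M) -> R) : Prop :=
  p fone = 1 /\
  (forall phi psi, D1 M A phi -> D1 M A psi -> p (fadd phi psi) = p phi + p psi) /\
  (forall r phi, D1 M A phi -> p (fscale r phi) = r * p phi) /\
  (forall phi, D1 M A phi -> (forall b, 0 <= ev1 M b phi) -> 0 <= p phi).

Definition is_extreme_type (M : Lstr) (A : list (car M)) (p : aform (car M) -> R) : Prop :=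
  is_type M A p /\
  forall (q1 q2 : aform (car M) -> R) (t : R),
    is_type M A q1 -> is_type M A q2 -> 0 < t < 1 ->
    (forall phi, D1 M A phi -> p phi = t * q1 phi + (1 - t) * q2 phi) ->
    forall phi, D1 M A phi -> q1 phi = p phi /\ q2 phi = p phi.

Definition realized (M : Lstr) (A : list (car M)) (p : aform (car M) -> R) : Prop :=
  exists b : car M, forall phi, D1 M A phi -> p phi = ev1 M b phi.

Definition extremally_aleph0_saturated (M : Lstr) : Prop :=
  forall (A : list (car M)) (p : aform (car M) -> R),
    is_extreme_type M A p -> realized M A p.

Definition normal (M : Lstr) (x : car M) : Prop := dist M x (szero M) = 1.

Definition Lle (M : Lstr) (x y : car M) : Prop := smeet M x y = x.

Definition env3 (M : Lstr) (x y z : car M) : nat -> car M :=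
  fun k => match k with 0%nat => x | 1%nat => y | _ => z end.

Definition definable_on_E (M : Lstr) (h : car M -> car M -> car M) : Prop :=
  forall eps, eps > 0 ->
    exists phi : aform (car M),
      form_vars_in (fun k => k = 0%nat \/ k = 1%nat \/ k = 2%nat) phi /\
      forall x y z, normal M x ->
        Rabs (dist M (h x y) z - feval M (fun a => a) (env3 M x y z) phi) <= eps.

(* In every model of PA, division with remainder by a nonzero x exists and is
   unique.  With the division error
     E(x,y,u,v) = d(y, xu + v) + d((v+1) /\ x, v+1),
   which vanishes exactly when (u,v) is a quotient-remainder pair, both facts
   become closed affine conditions, hence hold in M |= AA: for normal x,
     d(u,u') + d(v,v') <= 2 E(x,y,u,v) + 2 E(x,y,u',v')   and   inf_{u,v} E(x,y,u,v) = 0.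
   So M has approximate quotients, the stability inequality makes any sequence of
   them Cauchy, and completeness of M yields an exact one, unique by the same
   inequality.  It also gives d(f(x,y), z) = inf_{u,v} d(u,z) + 2 E(x,y,u,v), and
   similarly for g, which is definability. *)

From Stdlib Require Import Reals List Lra Lia Classical ClassicalEpsilon.
Open Scope R_scope.

Fixpoint form_bound {P : Type} (phi : aform P) : R :=
  match phi with
  | fone | fdist _ _ => 1
  | fadd phi psi => form_bound phi + form_bound psi
  | fscale r phi => Rabs r * form_bound phi
  | fsup _ phi | finf _ phi => form_bound phi
  end.

Lemma Rsup_is_lub (E : R -> Prop) (B r0 : R) :
  (forall r, E r -> r <= B) -> E r0 -> is_lub E (Rsup E).
Proof.
  intros HB Hr0. unfold Rsup. apply epsilon_spec.
  destruct (completeness E) as [m Hm].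
  - exists B. exact HB.
  - exists r0. exact Hr0.
  - exists m. exact Hm.
Qed.

Lemma Rsup_between (E : R -> Prop) (B r0 : R) :
  (forall r, E r -> -B <= r <= B) -> E r0 -> -B <= Rsup E <= B.
Proof.
  intros HB Hr0.
  destruct (Rsup_is_lub E B r0) as [Hub Hleast]; [intros r Hr; apply (HB r Hr) | exact Hr0 |].
  split.
  - specialize (HB r0 Hr0). specialize (Hub r0 Hr0). lra.
  - apply Hleast. intros r Hr. apply (HB r Hr).
Qed.

Section FormulaEvaluation.

Variables (S : Lstr) (P : Type) (pi : P -> car S).
Hypothesis dist_bounds : forall x y : car S, 0 <= dist S x y <= 1.

Lemma feval_between (phi : aform P) (e : nat -> car S) :
  - form_bound phi <= feval S pi e phi <= form_bound phi.
Proof.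
  revert e.
  induction phi as [| s t | phi IHphi psi IHpsi | r phi IHphi | n phi IHphi | n phi IHphi];
    intro e; simpl.
  - lra.
  - specialize (dist_bounds (teval S pi e s) (teval S pi e t)). lra.
  - specialize (IHphi e). specialize (IHpsi e). lra.
  - set (v := feval S pi e phi).
    assert (Hrv : Rabs (r * v) <= Rabs r * form_bound phi).
    { rewrite Rabs_mult. apply Rmult_le_compat_l; [apply Rabs_pos | apply Rabs_le, IHphi]. }
    pose proof (Rle_abs (r * v)). pose proof (Rle_abs (- (r * v))). rewrite Rabs_Ropp in *. lra.
  - apply (Rsup_between _ _ (feval S pi (upd e n (szero S)) phi)).
    + intros r [a ->]. apply IHphi.
    + exists (szero S). reflexivity.
  - enough (-form_bound phi <= Rsup (fun r => exists a, r = - feval S pi (upd e n a) phi)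
              <= form_bound phi) by lra.
    apply (Rsup_between _ _ (- feval S pi (upd e n (szero S)) phi)).
    + intros r [a ->]. specialize (IHphi (upd e n a)). lra.
    + exists (szero S). reflexivity.
Qed.

Lemma feval_fsup_lub (e : nat -> car S) (n : nat) (phi : aform P) :
  is_lub (fun r => exists a, r = feval S pi (upd e n a) phi) (feval S pi e (fsup n phi)).
Proof.
  apply (Rsup_is_lub _ (form_bound phi) (feval S pi (upd e n (szero S)) phi)).
  - intros r [a ->]. apply feval_between.
  - exists (szero S). reflexivity.
Qed.

Lemma feval_finf_glb (e : nat -> car S) (n : nat) (phi : aform P) :
  is_lub (fun r => exists a, r = - feval S pi (upd e n a) phi) (- feval S pi e (finf n phi)).
Proof.
  simpl. rewrite Ropp_involutive.
  apply (Rsup_is_lub _ (form_bound phi) (- feval S pi (upd e n (szero S)) phi)).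
  - intros r [a ->]. pose proof (feval_between phi (upd e n a)). lra.
  - exists (szero S). reflexivity.
Qed.

Lemma feval_fsup_ub e n phi a :
  feval S pi (upd e n a) phi <= feval S pi e (fsup n phi).
Proof. apply (feval_fsup_lub e n phi). exists a. reflexivity. Qed.

Lemma feval_fsup_le_at e n phi a c :
  feval S pi e (fsup n phi) <= c -> feval S pi (upd e n a) phi <= c.
Proof. apply Rle_trans, feval_fsup_ub. Qed.

Lemma feval_fsup_least e n phi c :
  (forall a, feval S pi (upd e n a) phi <= c) -> feval S pi e (fsup n phi) <= c.
Proof. intro Hc. apply (feval_fsup_lub e n phi). intros r [a ->]. apply Hc. Qed.

Lemma feval_finf_lb e n phi a :
  feval S pi e (finf n phi) <= feval S pi (upd e n a) phi.
Proof.
  enough (- feval S pi (upd e n a) phi <= - feval S pi e (finf n phi)) by lra.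
  apply (feval_finf_glb e n phi). exists a. reflexivity.
Qed.

Lemma feval_finf_greatest e n phi c :
  (forall a, c <= feval S pi (upd e n a) phi) -> c <= feval S pi e (finf n phi).
Proof.
  intro Hc.
  enough (- feval S pi e (finf n phi) <= - c) by lra.
  apply (feval_finf_glb e n phi). intros r [a ->]. specialize (Hc a). lra.
Qed.

End FormulaEvaluation.

Definition anot (phi : aformula) : aformula := aimp phi afalse.
Definition aexists (n : nat) (phi : aformula) : aformula := anot (aforall n (anot phi)).
Definition aand (phi psi : aformula) : aformula := anot (aimp phi (anot psi)).
Definition aor (phi psi : aformula) : aformula := aimp (anot phi) psi.

Lemma asat_aexists N e n phi : asat N e (aexists n phi) <-> exists a, asat N (upd e n a) phi.
Proof.
  unfold aexists, anot; simpl. split.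
  - intro H. apply NNPP. intro Hno. apply H. intros a Ha. apply Hno. exists a. exact Ha.
  - intros [a Ha] H. exact (H a Ha).
Qed.

Lemma asat_aand N e phi psi : asat N e (aand phi psi) <-> asat N e phi /\ asat N e psi.
Proof. unfold aand, anot; simpl. split; [intro H; split; apply NNPP; tauto | tauto]. Qed.

Lemma asat_aor N e phi psi : asat N e (aor phi psi) <-> asat N e phi \/ asat N e psi.
Proof. unfold aor, anot; simpl. destruct (classic (asat N e phi)); tauto. Qed.

Ltac solve_definable :=
  intro;
  repeat (setoid_rewrite asat_aexists || setoid_rewrite asat_aand || setoid_rewrite asat_aor);
  simpl; unfold upd; simpl; reflexivity.

Section PeanoArithmetic.

Variable N : PAsig.
Hypothesis HN : PAmodel N.

Local Notation zero := (pzero N).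
Local Notation succ x := (padd N x (pone N)).
Local Infix "+N" := (padd N) (at level 50, left associativity).
Local Infix "*N" := (pmul N) (at level 40, left associativity).

(* The induction schema of PA only covers first-order definable properties, so
   each inductive proof below supplies a formula [phi] defining its property;
   [solve_definable] checks that [phi] is a literal transcription of it. *)
Lemma pa_definable_ind (phi : aformula) (e : nat -> pcar N) (n : nat) (P : pcar N -> Prop) :
  (forall a, asat N (upd e n a) phi <-> P a) ->
  P zero -> (forall a, P a -> P (succ a)) -> forall a, P a.
Proof.
  intros Hdef H0 HS a. apply Hdef, (pa_ind N HN).
  - apply Hdef, H0.
  - intros b Hb. apply Hdef, HS, Hdef, Hb.
Qed.

Lemma pa_add_0_l x : zero +N x = x.
Proof.
  revert x. apply (pa_definable_ind (aeq (aadd azero (avar 0)) (avar 0)) (fun _ => zero) 0);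
    [solve_definable | apply (pa_add0 N HN) |].
  intros a IH. rewrite (pa_addS N HN), IH. reflexivity.
Qed.

Lemma pa_add_succ_l x y : succ x +N y = succ (x +N y).
Proof.
  revert y.
  apply (pa_definable_ind
    (aeq (aadd (aadd (avar 1) aone) (avar 0)) (aadd (aadd (avar 1) (avar 0)) aone)) (fun _ => x) 0);
    [solve_definable | rewrite !(pa_add0 N HN); reflexivity |].
  intros a IH. rewrite !(pa_addS N HN), IH. reflexivity.
Qed.

Lemma pa_add_comm x y : x +N y = y +N x.
Proof.
  revert y.
  apply (pa_definable_ind (aeq (aadd (avar 1) (avar 0)) (aadd (avar 0) (avar 1))) (fun _ => x) 0);
    [solve_definable | rewrite (pa_add0 N HN), pa_add_0_l; reflexivity |].
  intros a IH. rewrite (pa_addS N HN), pa_add_succ_l, IH. reflexivity.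
Qed.

Lemma pa_add_assoc x y z : x +N y +N z = x +N (y +N z).
Proof.
  revert z.
  apply (pa_definable_ind
    (aeq (aadd (aadd (avar 1) (avar 2)) (avar 0)) (aadd (avar 1) (aadd (avar 2) (avar 0))))
    (upd (fun _ => x) 2 y) 0);
    [solve_definable | rewrite !(pa_add0 N HN); reflexivity |].
  intros a IH. rewrite !(pa_addS N HN), IH. reflexivity.
Qed.

Lemma pa_add_cancel_r x y z : y +N x = z +N x -> y = z.
Proof.
  revert x.
  apply (pa_definable_ind
    (aimp (aeq (aadd (avar 1) (avar 0)) (aadd (avar 2) (avar 0))) (aeq (avar 1) (avar 2)))
    (upd (fun _ => y) 2 z) 0 (fun x => y +N x = z +N x -> y = z));
    [solve_definable | rewrite !(pa_add0 N HN); auto |].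
  intros a IH H. rewrite !(pa_addS N HN) in H. apply IH, (pa_succ_inj N HN), H.
Qed.

Lemma pa_add_cancel_l x y z : x +N y = x +N z -> y = z.
Proof. rewrite (pa_add_comm x y), (pa_add_comm x z). apply pa_add_cancel_r. Qed.

Lemma pa_zero_or_succ x : x = zero \/ exists w, x = succ w.
Proof.
  revert x.
  apply (pa_definable_ind
    (aor (aeq (avar 0) azero) (aexists 1 (aeq (avar 0) (aadd (avar 1) aone)))) (fun _ => zero) 0);
    [solve_definable | left; reflexivity |].
  intros a _. right. exists a. reflexivity.
Qed.

Lemma pa_le_total x y : PA_le N x y \/ PA_le N y x.
Proof.
  revert x.
  apply (pa_definable_ind
    (aor (aexists 2 (aeq (aadd (avar 0) (avar 2)) (avar 1)))
         (aexists 2 (aeq (aadd (avar 1) (avar 2)) (avar 0))))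
    (fun _ => y) 0);
    [solve_definable | left; exists y; apply pa_add_0_l |].
  intros a [[z Hz] | [z Hz]].
  - destruct (pa_zero_or_succ z) as [-> | [w ->]].
    + right. exists (pone N). rewrite <- Hz, (pa_add0 N HN). reflexivity.
    + left. exists w. rewrite pa_add_succ_l, <- (pa_addS N HN). exact Hz.
  - right. exists (succ z). rewrite (pa_addS N HN), Hz. reflexivity.
Qed.

Lemma pa_mul_add_distr_l x a b : x *N (a +N b) = x *N a +N x *N b.
Proof.
  revert b.
  apply (pa_definable_ind
    (aeq (amul (avar 1) (aadd (avar 2) (avar 0)))
         (aadd (amul (avar 1) (avar 2)) (amul (avar 1) (avar 0))))
    (upd (fun _ => x) 2 a) 0 (fun b => x *N (a +N b) = x *N a +N x *N b));
    [solve_definable | rewrite (pa_add0 N HN), (pa_mul0 N HN), (pa_add0 N HN); reflexivity |].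
  intros b IH. rewrite (pa_addS N HN), !(pa_mulS N HN), IH, pa_add_assoc. reflexivity.
Qed.

Lemma pa_le_1_nonzero x : x <> zero -> PA_le N (succ zero) x.
Proof.
  intro Hx. destruct (pa_zero_or_succ x) as [-> | [w ->]]; [contradiction |].
  exists w. rewrite pa_add_succ_l, pa_add_0_l. reflexivity.
Qed.

Lemma pa_divmod_unique_le x u v u' v' :
  x *N u +N v = x *N u' +N v' -> PA_le N (succ v) x -> PA_le N u u' -> u = u' /\ v = v'.
Proof.
  intros H [z Hz] [k <-].
  rewrite pa_mul_add_distr_l, pa_add_assoc in H. apply pa_add_cancel_l in H.
  destruct (pa_zero_or_succ k) as [-> | [w ->]].
  - rewrite (pa_mul0 N HN), pa_add_0_l in H. rewrite (pa_add0 N HN). split; [reflexivity | exact H].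
  - (* v = x w + x + v' would contradict v + 1 <= x *)
    exfalso. rewrite (pa_mulS N HN) in H. subst v.
    rewrite pa_add_succ_l, (pa_add_comm (x *N w) x), !pa_add_assoc in Hz.
    rewrite <- (pa_add0 N HN x) in Hz at 3. apply pa_add_cancel_l in Hz.
    rewrite !(pa_addS N HN) in Hz. exact (pa_succ_ne0 N HN _ Hz).
Qed.

Lemma pa_divmod_unique x u v u' v' :
  x *N u +N v = x *N u' +N v' -> PA_le N (succ v) x -> PA_le N (succ v') x -> u = u' /\ v = v'.
Proof.
  intros H Hv Hv'. destruct (pa_le_total u u') as [Hu | Hu].
  - exact (pa_divmod_unique_le x u v u' v' H Hv Hu).
  - destruct (pa_divmod_unique_le x u' v' u v (eq_sym H) Hv' Hu). split; congruence.
Qed.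

Lemma pa_divmod_exists x y : x <> zero -> exists u v, x *N u +N v = y /\ PA_le N (succ v) x.
Proof.
  intro Hx. revert y.
  apply (pa_definable_ind
    (aexists 2 (aexists 3 (aand (aeq (aadd (amul (avar 1) (avar 2)) (avar 3)) (avar 0))
                               (aexists 4 (aeq (aadd (aadd (avar 3) aone) (avar 4)) (avar 1))))))
    (fun _ => x) 0);
    [solve_definable | |].
  - exists zero, zero. split; [rewrite (pa_mul0 N HN), (pa_add0 N HN); reflexivity |].
    apply pa_le_1_nonzero, Hx.
  - intros y [u [v [<- [z Hz]]]]. destruct (pa_zero_or_succ z) as [-> | [w ->]].
    + rewrite (pa_add0 N HN) in Hz. exists (succ u), zero. split.
      * rewrite (pa_add0 N HN), (pa_mulS N HN), <- (pa_addS N HN), Hz. reflexivity.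
      * apply pa_le_1_nonzero, Hx.
    + exists u, (succ v). split.
      * rewrite (pa_addS N HN). reflexivity.
      * exists w. rewrite pa_add_succ_l, <- (pa_addS N HN). exact Hz.
Qed.

End PeanoArithmetic.

Definition div_err (S : Lstr) (x y u v : car S) : R :=
  dist S y (sadd S (smul S x u) v) + dist S (smeet S (sadd S v (sone S)) x) (sadd S v (sone S)).

Definition div_err_form {P : Type} (x y u v : nat) : aform P :=
  fadd (fdist (tvar y) (tadd (tmul (tvar x) (tvar u)) (tvar v)))
       (fdist (tmeet (tadd (tvar v) tone) (tvar x)) (tadd (tvar v) tone)).

Definition inf_div_err_form {P : Type} : aform P := finf 2 (finf 3 (div_err_form 0 1 2 3)).

Lemma feval_div_err_form {P : Type} (S : Lstr) (pi : P -> car S) e x y u v :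
  feval S pi e (div_err_form x y u v) = div_err S (e x) (e y) (e u) (e v).
Proof. reflexivity. Qed.

Section DivisionError.

Variables (S : Lstr) (P : Type) (pi : P -> car S).
Hypothesis dist_refl : forall a, dist S a a = 0.
Hypothesis dist_sep : forall a b, dist S a b = 0 -> a = b.
Hypothesis dist_bounds : forall a b, 0 <= dist S a b <= 1.

Lemma div_err_between x y u v : 0 <= div_err S x y u v <= 2.
Proof.
  unfold div_err.
  pose proof (dist_bounds y (sadd S (smul S x u) v)).
  pose proof (dist_bounds (smeet S (sadd S v (sone S)) x) (sadd S v (sone S))). lra.
Qed.

Lemma div_err_eq0_iff x y u v :
  div_err S x y u v = 0 <-> y = sadd S (smul S x u) v /\ Lle S (sadd S v (sone S)) x.
Proof.
  unfold div_err, Lle. split.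
  - intro H.
    pose proof (dist_bounds y (sadd S (smul S x u) v)).
    pose proof (dist_bounds (smeet S (sadd S v (sone S)) x) (sadd S v (sone S))).
    split; apply dist_sep; lra.
  - intros [Hy Hle]. rewrite <- Hy, Hle, !dist_refl. lra.
Qed.

Lemma feval_inf_div_err_lb e u v :
  feval S pi e inf_div_err_form <= div_err S (e 0%nat) (e 1%nat) u v.
Proof.
  eapply Rle_trans; [apply (feval_finf_lb S P pi dist_bounds _ _ _ u) |].
  eapply Rle_trans; [apply (feval_finf_lb S P pi dist_bounds _ _ _ v) |].
  rewrite feval_div_err_form. apply Rle_refl.
Qed.

Lemma feval_inf_div_err_greatest e c :
  (forall u v, c <= div_err S (e 0%nat) (e 1%nat) u v) ->
  c <= feval S pi e inf_div_err_form.
Proof.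
  intro Hc. apply (feval_finf_greatest S P pi dist_bounds). intro u.
  apply (feval_finf_greatest S P pi dist_bounds). intro v.
  rewrite feval_div_err_form. apply Hc.
Qed.

End DivisionError.

(* In both sentences the summand [2 d(x,0) - 2] vanishes for normal [x] and makes
   the condition trivial otherwise. *)
Definition stability_body {P : Type} : aform P :=
  fadd (fdist (tvar 2) (tvar 4)) (fadd (fdist (tvar 3) (tvar 5))
   (fadd (fscale (-2) (div_err_form 0 1 2 3)) (fadd (fscale (-2) (div_err_form 0 1 4 5))
   (fadd (fscale (-2) fone) (fscale 2 (fdist (tvar 0) tzero)))))).

Definition stability_sentence : aform Empty_set :=
  fsup 0 (fsup 1 (fsup 2 (fsup 3 (fsup 4 (fsup 5 stability_body))))).

Definition existence_body {P : Type} : aform P :=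
  fadd inf_div_err_form (fadd (fscale 2 (fdist (tvar 0) tzero)) (fscale (-2) fone)).

Definition existence_sentence : aform Empty_set := fsup 0 (fsup 1 existence_body).

Lemma feval_stability_body {P : Type} (S : Lstr) (pi : P -> car S) e :
  feval S pi e stability_body =
  dist S (e 2%nat) (e 4%nat) + dist S (e 3%nat) (e 5%nat)
  - 2 * div_err S (e 0%nat) (e 1%nat) (e 2%nat) (e 3%nat)
  - 2 * div_err S (e 0%nat) (e 1%nat) (e 4%nat) (e 5%nat)
  - 2 + 2 * dist S (e 0%nat) (szero S).
Proof. simpl. unfold div_err. ring. Qed.

Lemma feval_existence_body {P : Type} (S : Lstr) (pi : P -> car S) e :
  feval S pi e existence_body =
  feval S pi e inf_div_err_form + 2 * dist S (e 0%nat) (szero S) - 2.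
Proof. unfold existence_body. cbn [feval teval]. ring. Qed.

Lemma stability_sentence_closed : closed_form stability_sentence.
Proof. unfold closed_form; simpl; repeat split; lia. Qed.

Lemma existence_sentence_closed : closed_form existence_sentence.
Proof. unfold closed_form; simpl; repeat split; lia. Qed.

Section PeanoModelsSatisfySentences.

Variable N : PAsig.
Hypothesis HN : PAmodel N.

Lemma PA_dist_cases (a b : pcar N) :
  (a = b /\ dist (PA_Lstr N) a b = 0) \/ (a <> b /\ dist (PA_Lstr N) a b = 1).
Proof. simpl. destruct (excluded_middle_informative (a = b)); auto. Qed.

Lemma PA_dist_refl (a : pcar N) : dist (PA_Lstr N) a a = 0.
Proof. destruct (PA_dist_cases a a) as [[_ H] | [H _]]; [exact H | contradiction]. Qed.

Lemma PA_dist_sep (a b : pcar N) : dist (PA_Lstr N) a b = 0 -> a = b.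
Proof. destruct (PA_dist_cases a b) as [[H _] | [_ ->]]; [auto | lra]. Qed.

Lemma PA_dist_bounds (a b : pcar N) : 0 <= dist (PA_Lstr N) a b <= 1.
Proof. destruct (PA_dist_cases a b) as [[_ ->] | [_ ->]]; lra. Qed.

Lemma PA_Lle_iff (a b : pcar N) : Lle (PA_Lstr N) a b <-> PA_le N a b.
Proof.
  unfold Lle; simpl. destruct (excluded_middle_informative (PA_le N a b)) as [H | H].
  - tauto.
  - split; [intros <-; exists (pzero N); apply (pa_add0 N HN) | contradiction].
Qed.

Lemma PA_div_err_eq0_iff x y u v :
  div_err (PA_Lstr N) x y u v = 0 <->
  y = padd N (pmul N x u) v /\ PA_le N (padd N v (pone N)) x.
Proof.
  rewrite (div_err_eq0_iff (PA_Lstr N) PA_dist_refl PA_dist_sep PA_dist_bounds), PA_Lle_iff.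
  reflexivity.
Qed.

Lemma PA_div_err_dichotomy x y u v :
  div_err (PA_Lstr N) x y u v = 0 \/ 1 <= div_err (PA_Lstr N) x y u v.
Proof.
  unfold div_err.
  set (w := sadd (PA_Lstr N) v (sone (PA_Lstr N))).
  destruct (PA_dist_cases y (sadd (PA_Lstr N) (smul (PA_Lstr N) x u) v)) as [[_ ->] | [_ ->]];
  destruct (PA_dist_cases (smeet (PA_Lstr N) w x) w) as [[_ ->] | [_ ->]]; lra.
Qed.

Lemma PA_stability_inequality x y u v u' v' :
  dist (PA_Lstr N) u u' + dist (PA_Lstr N) v v'
  - 2 * div_err (PA_Lstr N) x y u v - 2 * div_err (PA_Lstr N) x y u' v'
  - 2 + 2 * dist (PA_Lstr N) x (pzero N) <= 0.
Proof.
  pose proof (div_err_between (PA_Lstr N) PA_dist_bounds x y u v).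
  pose proof (div_err_between (PA_Lstr N) PA_dist_bounds x y u' v').
  pose proof (PA_dist_bounds u u'). pose proof (PA_dist_bounds v v').
  pose proof (PA_dist_bounds x (pzero N)).
  destruct (PA_div_err_dichotomy x y u v) as [E | E]; [| lra].
  destruct (PA_div_err_dichotomy x y u' v') as [E' | E']; [| lra].
  apply PA_div_err_eq0_iff in E as [Hy Hle], E' as [Hy' Hle'].
  destruct (pa_divmod_unique N HN x u v u' v') as [<- <-]; [congruence | exact Hle | exact Hle' |].
  rewrite !PA_dist_refl. lra.
Qed.

Lemma PA_stability_sentence : sent_val (PA_Lstr N) stability_sentence <= 0.
Proof.
  unfold sent_val, stability_sentence.
  repeat (apply feval_fsup_least; [exact PA_dist_bounds | intro]).
  rewrite feval_stability_body. apply PA_stability_inequality.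
Qed.

Lemma PA_existence_sentence : sent_val (PA_Lstr N) existence_sentence <= 0.
Proof.
  unfold sent_val, existence_sentence.
  apply feval_fsup_least; [exact PA_dist_bounds | intro x].
  apply feval_fsup_least; [exact PA_dist_bounds | intro y].
  rewrite feval_existence_body.
  assert (Hinf := feval_inf_div_err_lb (PA_Lstr N) Empty_set
                    (fun p : Empty_set => match p with end) PA_dist_bounds
                    (upd (upd (fun _ => szero (PA_Lstr N)) 0 x) 1 y)).
  cbn [upd Nat.eqb] in *.
  destruct (PA_dist_cases x (szero (PA_Lstr N))) as [[-> ->] | [Hx ->]].
  - specialize (Hinf y y).
    pose proof (div_err_between (PA_Lstr N) PA_dist_bounds (szero (PA_Lstr N)) y y y).
    lra.
  - destruct (pa_divmod_exists N HN x y Hx) as [u [v [Hy Hv]]].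
    specialize (Hinf u v).
    assert (E : div_err (PA_Lstr N) x y u v = 0) by (apply PA_div_err_eq0_iff; auto).
    lra.
Qed.

End PeanoModelsSatisfySentences.

Definition vanishing (r : nat -> R) : Prop :=
  forall eps, 0 < eps -> exists N, forall n, (N <= n)%nat -> r n < eps.

Lemma vanishing_scaled_inv (C : R) : vanishing (fun n => C * / INR (S n)).
Proof.
  intros eps Heps.
  destruct (Rle_or_lt C 0) as [HC | HC].
  - exists 0%nat. intros n _.
    pose proof (Rinv_0_lt_compat _ (lt_0_INR _ (Nat.lt_0_succ n))). nra.
  - destruct (archimed_cor1 (eps / C)) as [N [HN HN0]]; [apply Rdiv_lt_0_compat; lra |].
    exists N. intros n Hn.
    assert (Hinv : / INR (S n) <= / INR N).
    { apply Rinv_le_contravar; [apply lt_0_INR, HN0 | apply le_INR; lia]. }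
    replace eps with (C * (eps / C)) by (field; lra).
    apply Rle_lt_trans with (C * / INR N); [apply Rmult_le_compat_l | apply Rmult_lt_compat_l]; lra.
Qed.

Lemma le_0_of_le_vanishing (x : R) (r : nat -> R) :
  vanishing r -> (forall n, x <= r n) -> x <= 0.
Proof.
  intros Hr Hx. apply Rle_plus_epsilon. intros eps Heps.
  destruct (Hr eps Heps) as [N HN]. specialize (HN N (Nat.le_refl N)). specialize (Hx N). lra.
Qed.

Lemma limit_of_fast_cauchy (M : Lstr) (HM : Lstructure_ok M) (r : nat -> R) (s : nat -> car M) :
  vanishing r -> (forall m n, dist M (s m) (s n) <= r m + r n) ->
  exists l, forall n, dist M (s n) l <= r n.
Proof.
  intros Hr Hs.
  destruct (d_complete M HM s) as [l Hl].
  { intros eps Heps. destruct (Hr (eps / 2)) as [N HN]; [lra |].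
    exists N. intros m n Hm Hn.
    pose proof (HN m Hm). pose proof (HN n Hn). specialize (Hs m n). lra. }
  exists l. intro n. apply Rle_plus_epsilon. intros eps Heps.
  destruct (Hl (eps / 2)) as [N1 HN1]; [lra |].
  destruct (Hr (eps / 2)) as [N2 HN2]; [lra |].
  specialize (HN1 (Nat.max N1 N2) (Nat.le_max_l N1 N2)).
  specialize (HN2 (Nat.max N1 N2) (Nat.le_max_r N1 N2)).
  pose proof (d_tri M HM (s n) (s (Nat.max N1 N2)) l). pose proof (Hs n (Nat.max N1 N2)). lra.
Qed.

Definition component_form {P : Type} (b : bool) : aform P :=
  finf 3 (finf 4 (fadd (fdist (tvar (if b then 3 else 4)) (tvar 2))
                       (fscale 2 (div_err_form 0 1 3 4)))).

Section DivisionInCompleteModels.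

Variable M : Lstr.
Hypothesis HM : Lstructure_ok M.
Hypothesis Hstab : sent_val M stability_sentence <= 0.
Hypothesis Hexist : sent_val M existence_sentence <= 0.

Lemma div_err_stable x y u v u' v' : normal M x ->
  dist M u u' + dist M v v' <= 2 * div_err M x y u v + 2 * div_err M x y u' v'.
Proof.
  intro Hx. pose proof Hstab as H. unfold sent_val, stability_sentence in H.
  apply (feval_fsup_le_at M _ _ (d_diam M HM)) with (a := x) in H.
  apply (feval_fsup_le_at M _ _ (d_diam M HM)) with (a := y) in H.
  apply (feval_fsup_le_at M _ _ (d_diam M HM)) with (a := u) in H.
  apply (feval_fsup_le_at M _ _ (d_diam M HM)) with (a := v) in H.
  apply (feval_fsup_le_at M _ _ (d_diam M HM)) with (a := u') in H.
  apply (feval_fsup_le_at M _ _ (d_diam M HM)) with (a := v') in H.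
  rewrite feval_stability_body in H. cbn [upd Nat.eqb] in H.
  unfold normal in Hx. rewrite Hx in H. lra.
Qed.

Lemma div_err_approx x y eps : normal M x -> 0 < eps -> exists u v, div_err M x y u v < eps.
Proof.
  intros Hx Heps. apply NNPP. intro Hno.
  pose proof Hexist as H. unfold sent_val, existence_sentence in H.
  apply (feval_fsup_le_at M _ _ (d_diam M HM)) with (a := x) in H.
  apply (feval_fsup_le_at M _ _ (d_diam M HM)) with (a := y) in H.
  rewrite feval_existence_body in H.
  assert (Hinf : eps <= feval M (fun p : Empty_set => match p with end)
                          (upd (upd (fun _ => szero M) 0 x) 1 y) inf_div_err_form).
  { apply feval_inf_div_err_greatest; [exact (d_diam M HM) |]. intros u v.
    apply Rnot_lt_le. intro Hlt. apply Hno. exists u, v. exact Hlt. }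
  cbn [upd Nat.eqb] in H. unfold normal in Hx. rewrite Hx in H. lra.
Qed.

Lemma div_err_lipschitz x y u v u' v' :
  div_err M x y u v <= div_err M x y u' v' + dist M u u' + 3 * dist M v v'.
Proof.
  unfold div_err.
  pose proof (d_tri M HM y (sadd M (smul M x u') v') (sadd M (smul M x u) v)).
  pose proof (d_sym M HM (sadd M (smul M x u') v') (sadd M (smul M x u) v)).
  pose proof (lip_add M HM (smul M x u) v (smul M x u') v').
  pose proof (lip_mul M HM x u x u').
  pose proof (lip_add M HM v (sone M) v' (sone M)).
  set (w := sadd M v (sone M)) in *. set (w' := sadd M v' (sone M)) in *.
  pose proof (d_tri M HM (smeet M w x) (smeet M w' x) w).
  pose proof (d_tri M HM (smeet M w' x) w' w).
  pose proof (lip_meet M HM w x w' x). pose proof (d_sym M HM w' w).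
  rewrite !(d_refl M HM) in *. lra.
Qed.

Lemma div_err_zero_exists x y : normal M x -> exists u v, div_err M x y u v = 0.
Proof.
  intro Hx.
  assert (Happrox : forall n, exists p : car M * car M,
             div_err M x y (fst p) (snd p) < / INR (S n)).
  { intro n. destruct (div_err_approx x y (/ INR (S n)) Hx) as [u [v Huv]].
    - apply Rinv_0_lt_compat, lt_0_INR, Nat.lt_0_succ.
    - exists (u, v). exact Huv. }
  destruct (choice _ Happrox) as [s Hs].
  assert (Hcauchy : forall m n,
    dist M (fst (s m)) (fst (s n)) + dist M (snd (s m)) (snd (s n)) <=
    2 * / INR (S m) + 2 * / INR (S n)).
  { intros m n. pose proof (div_err_stable x y (fst (s m)) (snd (s m)) (fst (s n)) (snd (s n)) Hx).
    pose proof (Hs m). pose proof (Hs n). lra. }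
  destruct (limit_of_fast_cauchy M HM (fun n => 2 * / INR (S n)) (fun n => fst (s n))) as [u Hu];
    [apply vanishing_scaled_inv | intros m n; pose proof (d_diam M HM (snd (s m)) (snd (s n)));
     specialize (Hcauchy m n); cbv beta; lra |].
  destruct (limit_of_fast_cauchy M HM (fun n => 2 * / INR (S n)) (fun n => snd (s n))) as [v Hv];
    [apply vanishing_scaled_inv | intros m n; pose proof (d_diam M HM (fst (s m)) (fst (s n)));
     specialize (Hcauchy m n); cbv beta; lra |].
  exists u, v. apply Rle_antisym; [| apply (div_err_between M (d_diam M HM))].
  apply (le_0_of_le_vanishing _ _ (vanishing_scaled_inv 9)). intro n.
  pose proof (div_err_lipschitz x y u v (fst (s n)) (snd (s n))) as Hlip.
  rewrite (d_sym M HM u), (d_sym M HM v) in Hlip.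
  specialize (Hs n). specialize (Hu n). specialize (Hv n). cbv beta in Hu, Hv. lra.
Qed.

Lemma divmod_unique x y u v u' v' : normal M x ->
  y = sadd M (smul M x u) v -> Lle M (sadd M v (sone M)) x ->
  y = sadd M (smul M x u') v' -> Lle M (sadd M v' (sone M)) x ->
  u = u' /\ v = v'.
Proof.
  intros Hx Hy Hv Hy' Hv'.
  pose proof (div_err_stable x y u v u' v' Hx) as Hs.
  rewrite (proj2 (div_err_eq0_iff M (d_refl M HM) (d_sep M HM) (d_diam M HM) x y u v)),
    (proj2 (div_err_eq0_iff M (d_refl M HM) (d_sep M HM) (d_diam M HM) x y u' v')) in Hs; auto.
  pose proof (d_diam M HM u u'). pose proof (d_diam M HM v v').
  split; apply (d_sep M HM); lra.
Qed.

Lemma divmod_functions : exists f g : car M -> car M -> car M,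
  forall x y, normal M x -> div_err M x y (f x y) (g x y) = 0.
Proof.
  assert (H : forall xy : car M * car M, exists uv : car M * car M,
    normal M (fst xy) -> div_err M (fst xy) (snd xy) (fst uv) (snd uv) = 0).
  { intros [x y]. destruct (classic (normal M x)) as [Hx | Hx].
    - destruct (div_err_zero_exists x y Hx) as [u [v Huv]]. exists (u, v). intros _. exact Huv.
    - exists (x, y). intro. contradiction. }
  destruct (choice _ H) as [h Hh].
  exists (fun x y => fst (h (x, y))), (fun x y => snd (h (x, y))).
  intros x y. exact (Hh (x, y)).
Qed.

Lemma definable_component (f g : car M -> car M -> car M) (b : bool) :
  (forall x y, normal M x -> div_err M x y (f x y) (g x y) = 0) ->
  definable_on_E M (fun x y => if b then f x y else g x y).
Proof.
  intros Hfg eps Heps. exists (component_form b). split.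
  { destruct b; simpl; repeat split; lia. }
  intros x y z Hx.
  enough (E : feval M (fun a => a) (env3 M x y z) (component_form b) =
              dist M (if b then f x y else g x y) z).
  { rewrite E, Rminus_diag, Rabs_R0. lra. }
  pose proof (Hfg x y Hx) as Hzero.
  apply Rle_antisym.
  - eapply Rle_trans; [apply (feval_finf_lb M _ _ (d_diam M HM) _ _ _ (f x y)) |].
    eapply Rle_trans; [apply (feval_finf_lb M _ _ (d_diam M HM) _ _ _ (g x y)) |].
    destruct b; cbn [feval]; rewrite feval_div_err_form; cbn [teval upd Nat.eqb env3];
      rewrite Hzero; lra.
  - apply (feval_finf_greatest M _ _ (d_diam M HM)). intro u.
    apply (feval_finf_greatest M _ _ (d_diam M HM)). intro v.
    pose proof (div_err_stable x y u v (f x y) (g x y) Hx) as Hs. rewrite Hzero in Hs.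
    pose proof (d_diam M HM u (f x y)). pose proof (d_diam M HM v (g x y)).
    pose proof (d_sym M HM u (f x y)). pose proof (d_sym M HM v (g x y)).
    destruct b; cbn [feval]; rewrite feval_div_err_form; cbn [teval upd Nat.eqb env3].
    + pose proof (d_tri M HM (f x y) u z). lra.
    + pose proof (d_tri M HM (g x y) v z). lra.
Qed.

End DivisionInCompleteModels.

Theorem mainTheorem9 (M : Lstr) (HM : Lstructure_ok M) (HAA : satisfies_AA M)
    (Hsat : extremally_aleph0_saturated M) :
  (forall x y u v u' v' : car M, normal M x ->
     y = sadd M (smul M x u) v -> Lle M (sadd M v (sone M)) x ->
     y = sadd M (smul M x u') v' -> Lle M (sadd M v' (sone M)) x ->
     u = u' /\ v = v') /\
  exists f g : car M -> car M -> car M,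
    (forall x y : car M, normal M x ->
       y = sadd M (smul M x (f x y)) (g x y) /\ Lle M (sadd M (g x y) (sone M)) x) /\
    definable_on_E M f /\ definable_on_E M g.
Proof.
  pose proof (HAA _ stability_sentence_closed PA_stability_sentence) as Hstab.
  pose proof (HAA _ existence_sentence_closed PA_existence_sentence) as Hexist.
  split; [exact (divmod_unique M HM Hstab) |].
  destruct (divmod_functions M HM Hstab Hexist) as [f [g Hfg]].
  exists f, g. split; [| split].
  - intros x y Hx. apply (div_err_eq0_iff M (d_refl M HM) (d_sep M HM) (d_diam M HM)), Hfg, Hx.
  - exact (definable_component M HM Hstab f g true Hfg).
  - exact (definable_component M HM Hstab f g false Hfg).
Qed.
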